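(* Let $d\ge 2$ and let $\mathcal{M}^d$ be the set of all maskable observables on $\mathbb{C}^d$, i.e. Hermitian $d\times d$ matrices $\mathcal{O}$ for which there exists some quantum channel $\mathcal{E}$ with $\mathcal{E}^*(\mathcal{O})=\mathbb{I}$. Then there is no single quantum channel $\mathcal{E}$ on $d\times d$ matrices such that $\mathcal{E}^*(\mathcal{O})=\mathbb{I}$ for all $\mathcal{O}\in\mathcal{M}^d$.
   Context: A quantum channel $\mathcal{E}$ is a linear completely positive trace-preserving map on $d\times d$ complex matrices, $\mathcal{E}(\rho)=\sum_i E_i\rho E_i^\dagger$ with $\sum_i E_i^\dagger E_i=\mathbb{I}$; its adjoint is $\mathcal{E}^*(X)=\sum_i E_i^\dagger X E_i$, so that $\operatorname{Tr}(\mathcal{E}(\rho)X)=\operatorname{Tr}(\rho\,\mathcal{E}^*(X))$. *)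

From HB Require Import structures.
From mathcomp Require Import all_boot all_order all_algebra.
From mathcomp Require Import complex.
From mathcomp Require Export reals.
Set Implicit Arguments. Unset Strict Implicit. Unset Printing Implicit Defensive.
Import Order.TTheory GRing.Theory Num.Theory.
Local Open Scope ring_scope.

Definition dagger (C : numClosedFieldType) (d : nat) (A : 'M[C]_d) : 'M[C]_d :=
  (map_mx Num.conj A)^T.

Definition hermitian (C : numClosedFieldType) (d : nat) (A : 'M[C]_d) : Prop :=
  dagger A = A.

(* A quantum channel on d x d matrices given by a finite list of Kraus
   operators E_i with sum_i E_i^dagger E_i = I. *)
Definition is_kraus (C : numClosedFieldType) (d : nat) (Es : seq 'M[C]_d) : Prop :=
  \sum_(E <- Es) (dagger E *m E) = 1%:M.

Definition channel (C : numClosedFieldType) (d : nat) (Es : seq 'M[C]_d)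
  (rho : 'M[C]_d) : 'M[C]_d :=
  \sum_(E <- Es) (E *m rho *m dagger E).

Definition channel_adj (C : numClosedFieldType) (d : nat) (Es : seq 'M[C]_d)
  (X : 'M[C]_d) : 'M[C]_d :=
  \sum_(E <- Es) (dagger E *m X *m E).

Definition maskable (C : numClosedFieldType) (d : nat) (O : 'M[C]_d) : Prop :=
  hermitian O /\ exists Es : seq 'M[C]_d, is_kraus Es /\ channel_adj Es O = 1%:M.

From Pilot Require Import Defs.
From HB Require Import structures.
From mathcomp Require Import all_boot all_order all_algebra.
From mathcomp Require Import complex.
From mathcomp Require Import reals.
Import GRing.Theory Num.Theory.
Local Open Scope ring_scope.

(* Every Hermitian O with a diagonal entry O_kk = 1 is maskable: the channel
   preparing |k><k|, with Kraus operators |k><j|, has adjoint X |-> X_kk I.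
   Hence both |k><k| and I - |k><k| are maskable (here d >= 2 is used), and a
   channel masking both would send I = |k><k| + (I - |k><k|) to 2 I, whereas
   the adjoint of any trace-preserving map is unital. *)

Section Channels.

Context {C : numClosedFieldType} {d : nat}.
Implicit Types (Es : seq 'M[C]_d) (A B O : 'M[C]_d).

Lemma daggerB A B : dagger (A - B) = dagger A - dagger B.
Proof. by apply/matrixP => i j; rewrite /dagger !mxE rmorphB. Qed.

Lemma dagger1 : dagger (1%:M : 'M[C]_d) = 1%:M.
Proof.
by apply/matrixP => i j; rewrite /dagger !mxE rmorphMn rmorph1 eq_sym.
Qed.

Lemma dagger_delta (j k : 'I_d) : dagger (delta_mx j k : 'M[C]_d) = delta_mx k j.
Proof.
apply/matrixP => x y; rewrite /dagger !mxE andbC.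
by case: (_ && _); rewrite ?conjC1 ?conjC0.
Qed.

Lemma hermitianB A B :
  Defs.hermitian A -> Defs.hermitian B -> Defs.hermitian (A - B).
Proof. by rewrite /Defs.hermitian daggerB => -> ->. Qed.

Lemma hermitian1 : Defs.hermitian (1%:M : 'M[C]_d).
Proof. exact: dagger1. Qed.

Lemma hermitian_delta (k : 'I_d) : Defs.hermitian (delta_mx k k : 'M[C]_d).
Proof. exact: dagger_delta. Qed.

Lemma channel_adjD Es A B :
  channel_adj Es (A + B) = channel_adj Es A + channel_adj Es B.
Proof.
rewrite /channel_adj -big_split /=; apply: eq_bigr => E _.
by rewrite mulmxDr mulmxDl.
Qed.

Lemma channel_adj1 Es : is_kraus Es -> channel_adj Es 1%:M = 1%:M.
Proof.
by move=> kraus_Es; rewrite -[RHS]kraus_Es; apply: eq_bigr => E _; rewrite mulmx1.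
Qed.

Lemma mul_delta_mx_delta (j k : 'I_d) O :
  delta_mx j k *m O *m delta_mx k j = O k k *: delta_mx j j.
Proof.
apply/matrixP => x y; rewrite !mxE (bigD1 k) //= big1 ?addr0; last first.
  by move=> l /negbTE neq_lk; rewrite !mxE neq_lk /= mulr0.
rewrite !mxE eqxx /=; under eq_bigr do rewrite !mxE.
rewrite (bigD1 k) //= big1 ?addr0; last first.
  by move=> l /negbTE neq_lk; rewrite neq_lk andbF mul0r.
rewrite eqxx andbT.
by case: (x == j); case: (y == j); rewrite /= ?mul1r ?mulr1 ?mul0r ?mulr0.
Qed.

Definition prepare_kraus (k : 'I_d) : seq 'M[C]_d :=
  [seq delta_mx k j | j <- index_enum 'I_d].

Lemma is_kraus_prepare (k : 'I_d) : is_kraus (prepare_kraus k).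
Proof.
rewrite /is_kraus big_map mx1_sum_delta; apply: eq_bigr => j _.
by rewrite dagger_delta mul_delta_mx.
Qed.

Lemma channel_adj_prepare (k : 'I_d) O :
  channel_adj (prepare_kraus k) O = (O k k)%:M.
Proof.
rewrite /channel_adj big_map scalar_mx_sum_delta; apply: eq_bigr => j _.
by rewrite dagger_delta mul_delta_mx_delta.
Qed.

Lemma maskable_diag1 (k : 'I_d) O : Defs.hermitian O -> O k k = 1 -> maskable O.
Proof.
move=> herm_O Okk; split=> //; exists (prepare_kraus k).
by split; [exact: is_kraus_prepare | rewrite channel_adj_prepare Okk].
Qed.

End Channels.

Theorem theorem5 (R : realType) (d : nat) (hd : (2 <= d)%N) :
  ~ exists Es : seq 'M[R[i]]_d,
      is_kraus Es /\
      forall O : 'M[R[i]]_d, maskable O -> channel_adj Es O = 1%:M.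
Proof.
case=> Es [kraus_Es masks_all].
pose k0 : 'I_d := Ordinal (ltnW hd); pose k1 : 'I_d := Ordinal hd.
pose P : 'M[R[i]]_d := delta_mx k0 k0.
have maskable_P : maskable P.
  apply: (maskable_diag1 k0); first exact: hermitian_delta.
  by rewrite mxE !eqxx.
have maskable_1P : maskable (1%:M - P).
  apply: (maskable_diag1 k1).
    exact: hermitianB hermitian1 (hermitian_delta k0).
  by rewrite !mxE eqxx /= subr0.
have := channel_adjD Es P (1%:M - P).
rewrite addrC subrK channel_adj1 // !masks_all // => /matrixP /(_ k0 k0).
by rewrite !mxE eqxx /= => /eqP; rewrite eq_sym -subr_eq0 addrK oner_eq0.
Qed.
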